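(* Assume the setting below, on the mesh $S_\lambda$ with either $\lambda=N$ or $\lambda=\varepsilon^{-1}$. Suppose there are a constant $C'>0$ and numbers $\tilde\eta_1,\tilde\eta_2\ge0$ such that \[ |\tau_i[w]|\le \begin{cases} C'\tilde\eta_1\varepsilon^{-1}, & 1\le i\le J-1,\\ C'\tilde\eta_2, & J\le i\le N-1.\end{cases} \] Then \[ \|w^N-W^N\|\le C\max\{\tilde\eta_1\ln\lambda,\ \tilde\eta_2\}, \] where $C$ is independent of $\varepsilon$, $N$, $\tilde\eta_1$ and $\tilde\eta_2$.
   Context: Standing setup. Let $0<\varepsilon<1$. Let $b,c,f\in C^4[0,1]$, and let $\beta$ be a constant with $b(x)>\beta>0$ and $c(x)\ge0$ on $[0,1]$. Let $u$ be the solution of $-\varepsilon u''-b u'+cu=f$ on $(0,1)$ with $u(0)=u(1)=0$. Let $u_0$ be the solution of $-b u_0'+c u_0=f$ on $(0,1)$ with $u_0(1)=0$. Set $w=u-u_0$; it solves $-\varepsilon w''-bw'+cw=\varepsilon u_0''$, $w(0)=-u_0(0)$, $w(1)=0$. Mesh $S_\lambda$. $N$ is a positive integer. $Q\in(0,1)$ is a fixed rational number such that $J=QN$ is an integer. $a>0$ is a mesh parameter, and $\lambda\in\{N,\varepsilon^{-1}\}$. The transition point is $\xi=(a\varepsilon/\beta)\ln\lambda$, assumed to satisfy $\xi\le Q$. Set $h=\xi/J$ and $H=(1-\xi)/(N-J)$. The mesh points are $x_i=ih$ for $0\le i\le J$ and $x_i=\xi+(i-J)H$ for $J\le i\le N$.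 Write $h_i=x_i-x_{i-1}$ and $\hbar_i=(h_i+h_{i+1})/2$. Scheme. $D^+U_i=(U_{i+1}-U_i)/h_{i+1}$, $D^-U_i=(U_i-U_{i-1})/h_i$, $D''U_i=(D^+U_i-D^-U_i)/\hbar_i$. Let $\sigma(\rho)=2\rho/(e^{2\rho}-1)$ for $\rho>0$, $\sigma(0)=1$, and $\rho_i=b(x_i)h_{i+1}/(2\varepsilon)$. The ASI operator is $L^NU_i=-\varepsilon\sigma(\rho_i)D''U_i-b(x_i)D^+U_i+c(x_i)U_i$ for $1\le i\le N-1$. $W^N$ solves $W^N_0=-u_0(0)$, $L^NW^N_i=\varepsilon u_0''(x_i)$ for $1\le i\le N-1$, $W^N_N=0$. $g^N$ is the restriction of $g$ to the mesh, and $\|U\|=\max_i|U_i|$. The truncation error is $\tau_i[g]=-\varepsilon\sigma(\rho_i)D''g(x_i)-b(x_i)D^+g(x_i)+\varepsilon g''(x_i)+b(x_i)g'(x_i)$. $C$ denotes a generic positive constant independent of $\varepsilon$ and $N$. *)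

From Stdlib Require Import Reals Lra ZArith.
From Coquelicot Require Import Coquelicot.
Open Scope R_scope.

(* g belongs to C^k[0,1]: g agrees on [0,1] with a function that is C^k on R
   (equivalent to C^k[0,1] with one-sided derivatives at the endpoints,
   by the standard extension theorem). *)
Definition Ck01 (k : nat) (g : R -> R) : Prop :=
  exists G : R -> R, (forall t, 0 <= t <= 1 -> G t = g t) /\
    forall j, (j <= k)%nat -> forall t, ex_derive_n G j t /\ continuous (Derive_n G j) t.

Definition sigma (rho : R) : R :=
  if Req_EM_T rho 0 then 1 else 2 * rho / (exp (2 * rho) - 1).

Definition mesh (xi : R) (N J : nat) (i : nat) : R :=
  if (i <=? J)%nat then INR i * (xi / INR J)
  else xi + INR (i - J) * ((1 - xi) / INR (N - J)).

Definition hstep (x : nat -> R) (i : nat) : R := x i - x (i - 1)%nat.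
Definition hbar (x : nat -> R) (i : nat) : R := (hstep x i + hstep x (i + 1)%nat) / 2.

Definition Dp (x : nat -> R) (U : nat -> R) (i : nat) : R :=
  (U (i + 1)%nat - U i) / hstep x (i + 1)%nat.
Definition Dm (x : nat -> R) (U : nat -> R) (i : nat) : R :=
  (U i - U (i - 1)%nat) / hstep x i.
Definition Dpp (x : nat -> R) (U : nat -> R) (i : nat) : R :=
  (Dp x U i - Dm x U i) / hbar x i.

Definition rho (eps : R) (b : R -> R) (x : nat -> R) (i : nat) : R :=
  b (x i) * hstep x (i + 1)%nat / (2 * eps).

Definition LN (eps : R) (b c : R -> R) (x : nat -> R) (U : nat -> R) (i : nat) : R :=
  - eps * sigma (rho eps b x i) * Dpp x U i - b (x i) * Dp x U i + c (x i) * U i.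

Definition tau (eps : R) (b : R -> R) (x : nat -> R) (g : R -> R) (i : nat) : R :=
  - eps * sigma (rho eps b x i) * Dpp x (fun j => g (x j)) i
  - b (x i) * Dp x (fun j => g (x j)) i
  + eps * Derive_n g 2 (x i) + b (x i) * Derive g (x i).

From Pilot Require Import Defs.
From Stdlib Require Import Reals Lra Lia ZArith.
From Coquelicot Require Import Coquelicot.
Open Scope R_scope.

(* The error e_i = w(x_i) - W_i satisfies L^N e = tau[w] at the interior nodes, and L^N obeys a
   discrete minimum principle, so |e| is dominated by any barrier V >= 0 with L^N V >= |tau[w]|.
   Take V_j = sum_{m > j} g_m h_m, where the fluxes g solve
   (kappa_m + b(x_m)) g_{m+1} = F_m + kappa_m g_m with kappa_m = eps sigma(rho_m) / hbar_m;
   then L^N V = F + c V exactly. For the source C' eta2 the fluxes stay below C' eta2 / beta.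
   For the layer source C' eta1 / eps the fluxes are at most C' eta1 / (eps beta), so the fine
   part of the sum is O(eta1 xi / eps); on the fine mesh sigma(rho) e^{2 rho} >= 1 also bounds
   the growth of each flux by (C' eta1 / eps) h e^{max b * xi / eps} / eps, so g_J = O(eta1 xi / eps^2),
   and on the coarse mesh the fluxes decay with weighted sum at most (2 eps / beta) g_J.
   Both contributions are O(eta1 xi / eps) = O(eta1 ln lambda). *)

Lemma sigma_bounds r : 0 < r ->
  0 < Defs.sigma r /\ Defs.sigma r <= 1 /\ 1 <= Defs.sigma r * exp (2 * r).
Proof.
  intros Hr. unfold Defs.sigma. destruct (Req_EM_T r 0) as [E|E]; [lra|].
  assert (H1 : 1 + 2 * r < exp (2 * r)) by (apply exp_ineq1; lra).
  assert (H2 : 1 + - (2 * r) <= exp (- (2 * r))) by apply exp_ineq1_le.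
  rewrite exp_Ropp in H2.
  set (X := exp (2 * r)) in *.
  assert (HX : 0 < X) by (unfold X; apply exp_pos).
  assert (Hs : 2 * r / (X - 1) * (X - 1) = 2 * r) by (field; lra).
  set (s := 2 * r / (X - 1)) in *.
  assert (H3 : X * (1 - 2 * r) <= 1).
  { apply (Rmult_le_compat_l X) in H2; [|lra]. rewrite Rinv_r in H2; lra. }
  repeat split; nra.
Qed.

Lemma Derive_n_minus_Ck01 n (u v : R -> R) k t :
  Ck01 n u -> Ck01 n v -> 0 < t < 1 -> (k <= n)%nat ->
  Derive_n (fun s => u s - v s) k t = Derive_n u k t - Derive_n v k t.
Proof.
  intros [U [HU HUd]] [V [HV HVd]] Ht Hk.
  assert (Hloc : locally t (fun s => 0 <= s <= 1)).
  { apply (locally_interval _ t 0 1); simpl; try lra. intros y H1 H2; simpl in *; lra. }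
  rewrite (Derive_n_ext_loc (fun s => u s - v s) (fun s => U s - V s)).
  2: { eapply filter_imp; [|exact Hloc]. intros s Hs; simpl; rewrite HU, HV; auto. }
  rewrite Derive_n_minus.
  2, 3: apply filter_forall; intros y k' Hk'.
  2: apply HUd; lia.
  2: apply HVd; lia.
  rewrite (Derive_n_ext_loc u U), (Derive_n_ext_loc v V); auto.
  - eapply filter_imp; [|exact Hloc]. intros s Hs; simpl; rewrite HV; auto.
  - eapply filter_imp; [|exact Hloc]. intros s Hs; simpl; rewrite HU; auto.
Qed.

Lemma Ck01_bounded_above k g : Ck01 k g -> exists M, forall t, 0 <= t <= 1 -> g t <= M.
Proof.
  intros [G [HG HGd]].
  destruct (continuity_ab_maj G 0 1) as [t0 [Ht0 _]]; [lra| |].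
  { intros t Ht. apply continuity_pt_filterlim. exact (proj2 (HGd 0%nat ltac:(lia) t)). }
  exists (G t0). intros t Ht. rewrite <- HG by exact Ht. apply Ht0; exact Ht.
Qed.

Lemma exists_first_argmin (f : nat -> R) n : exists k, (k <= n)%nat /\
  (forall i, (i <= n)%nat -> f k <= f i) /\ (forall i, (i < k)%nat -> f k < f i).
Proof.
  induction n as [|n [k [Hk [Hmin Hfirst]]]].
  - exists 0%nat. repeat split; [lia| |lia].
    intros i Hi. replace i with 0%nat by lia. lra.
  - destruct (Rlt_le_dec (f (S n)) (f k)) as [Hlt|Hle].
    + exists (S n). repeat split; [lia| |].
      * intros i Hi. destruct (Nat.eq_dec i (S n)); [subst; lra|].
        specialize (Hmin i ltac:(lia)); lra.
      * intros i Hi. specialize (Hmin i ltac:(lia)); lra.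
    + exists k. repeat split; [lia| |exact Hfirst].
      intros i Hi. destruct (Nat.eq_dec i (S n)); [subst; lra|]. apply Hmin; lia.
Qed.

Lemma LN_minus eps b c x U V i :
  LN eps b c x (fun j => U j - V j) i = LN eps b c x U i - LN eps b c x V i.
Proof. unfold LN, Dpp, Dp, Dm, Rdiv. ring. Qed.

Lemma LN_plus eps b c x U V i :
  LN eps b c x (fun j => U j + V j) i = LN eps b c x U i + LN eps b c x V i.
Proof. unfold LN, Dpp, Dp, Dm, Rdiv. ring. Qed.

Lemma LN_error_eq_tau eps (b c f : R -> R) x (u u0 : R -> R) (W : nat -> R) i :
  Ck01 2 u -> Ck01 2 u0 -> 0 < x i < 1 ->
  - eps * Derive_n u 2 (x i) - b (x i) * Derive u (x i) + c (x i) * u (x i) = f (x i) ->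
  - b (x i) * Derive u0 (x i) + c (x i) * u0 (x i) = f (x i) ->
  LN eps b c x W i = eps * Derive_n u0 2 (x i) ->
  LN eps b c x (fun j => (u (x j) - u0 (x j)) - W j) i = tau eps b x (fun t => u t - u0 t) i.
Proof.
  intros Hu Hu0 Hx Hode Hode0 HW.
  rewrite (LN_minus eps b c x (fun j => u (x j) - u0 (x j)) W), HW.
  unfold tau.
  rewrite (Derive_n_minus_Ck01 2 u u0 2 (x i)) by (auto; lia).
  change (Derive (fun t => u t - u0 t) (x i)) with (Derive_n (fun t => u t - u0 t) 1 (x i)).
  rewrite (Derive_n_minus_Ck01 2 u u0 1 (x i)) by (auto; lia).
  change (Derive_n u 1 (x i)) with (Derive u (x i)).
  change (Derive_n u0 1 (x i)) with (Derive u0 (x i)).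
  unfold LN. lra.
Qed.
Fixpoint mesh_sum (g x : nat -> R) (n : nat) : R :=
  match n with
  | O => 0
  | S m => mesh_sum g x m + g (S m) * hstep x (S m)
  end.

Section DiscreteBarrier.

Variables (eps beta : R) (b c : R -> R) (x : nat -> R) (N : nat).
Hypotheses (Heps : 0 < eps) (Hbeta : 0 < beta)
  (Hstep : forall i, (1 <= i <= N)%nat -> 0 < hstep x i)
  (Hb : forall i, (i <= N)%nat -> beta <= b (x i))
  (Hc : forall i, (i <= N)%nat -> 0 <= c (x i)).

Lemma hstep_succ_le_2hbar i : (i < N)%nat -> 0 < hstep x (i + 1) <= 2 * hbar x i.
Proof.
  intros Hi. unfold hbar. pose proof (Hstep (i + 1) ltac:(lia)).
  destruct i as [|i].
  - assert (hstep x 0 = 0) by (unfold hstep; simpl; ring). lra.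
  - pose proof (Hstep (S i) ltac:(lia)). lra.
Qed.

Lemma rho_pos i : (i < N)%nat -> 0 < rho eps b x i.
Proof.
  intros Hi. unfold rho. pose proof (Hb i ltac:(lia)). pose proof (hstep_succ_le_2hbar i Hi).
  apply Rdiv_lt_0_compat; [apply Rmult_lt_0_compat|]; lra.
Qed.

Definition diffusion (i : nat) : R := eps * Defs.sigma (rho eps b x i) / hbar x i.

Lemma diffusion_pos i : (i < N)%nat -> 0 < diffusion i.
Proof.
  intros Hi. destruct (sigma_bounds _ (rho_pos i Hi)) as [Hs _].
  pose proof (hstep_succ_le_2hbar i Hi).
  unfold diffusion. apply Rdiv_lt_0_compat; [apply Rmult_lt_0_compat|]; lra.
Qed.

Lemma diffusion_mul_step_le i : (i < N)%nat -> diffusion i * hstep x (S i) <= 2 * eps.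
Proof.
  intros Hi. destruct (sigma_bounds _ (rho_pos i Hi)) as [Hs0 [Hs1 _]].
  pose proof (hstep_succ_le_2hbar i Hi) as Hh. rewrite Nat.add_1_r in Hh.
  unfold diffusion. set (s := Defs.sigma (rho eps b x i)) in *.
  replace (eps * s / hbar x i * hstep x (S i)) with (eps * s * (hstep x (S i) / hbar x i))
    by (field; lra).
  assert (hstep x (S i) / hbar x i <= 2) by (apply Rle_div_l; lra).
  assert (0 <= hstep x (S i) / hbar x i) by (apply Rdiv_le_0_compat; lra).
  set (q := hstep x (S i) / hbar x i) in *.
  assert (s * q <= 2) by nra.
  rewrite Rmult_assoc. nra.
Qed.

(* [flux F n] is -D^- (barrier F) at node n: the recursion is L^N (barrier F) = F + c (barrier F)
   solved for D^+ in terms of D^-. *)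
Fixpoint flux (F : nat -> R) (n : nat) : R :=
  match n with
  | O => 0
  | S m => (F m + diffusion m * flux F m) / (diffusion m + b (x m))
  end.

Definition barrier (F : nat -> R) (j : nat) : R := mesh_sum (flux F) x N - mesh_sum (flux F) x j.

Lemma flux_nonneg F n : (n <= N)%nat -> (forall m, (m < n)%nat -> 0 <= F m) -> 0 <= flux F n.
Proof.
  induction n as [|n IH]; intros Hn HF; simpl; [lra|].
  pose proof (diffusion_pos n ltac:(lia)). pose proof (Hb n ltac:(lia)).
  pose proof (HF n ltac:(lia)). pose proof (IH ltac:(lia) ltac:(intros; apply HF; lia)).
  apply Rdiv_le_0_compat; nra.
Qed.

Lemma flux_le F Fb n : (n <= N)%nat -> 0 <= Fb ->
  (forall m, (m < n)%nat -> 0 <= F m <= Fb) -> flux F n <= Fb / beta.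
Proof.
  induction n as [|n IH]; intros Hn HFb HF; simpl.
  - apply Rdiv_le_0_compat; lra.
  - pose proof (diffusion_pos n ltac:(lia)). pose proof (Hb n ltac:(lia)).
    destruct (HF n ltac:(lia)) as [HF0 HF1].
    pose proof (IH ltac:(lia) HFb ltac:(intros; apply HF; lia)).
    assert (Fb / beta * beta = Fb) by (field; lra).
    assert (0 <= Fb / beta) by (apply Rdiv_le_0_compat; lra).
    apply Rle_div_l; nra.
Qed.

Lemma flux_succ_le F n : (n < N)%nat -> 0 <= F n -> 0 <= flux F n ->
  flux F (S n) <= flux F n + F n / diffusion n.
Proof.
  intros Hn HF Hg. pose proof (diffusion_pos n Hn). pose proof (Hb n ltac:(lia)).
  simpl. set (g := flux F n) in *. set (k := diffusion n) in *.
  assert (F n / k * k = F n) by (field; lra).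
  assert (0 <= F n / k) by (apply Rdiv_le_0_compat; lra).
  apply Rle_div_l; nra.
Qed.

Lemma flux_le_linear F q n : (n <= N)%nat ->
  (forall m, (m < n)%nat -> 0 <= F m /\ F m / diffusion m <= q) -> flux F n <= INR n * q.
Proof.
  induction n as [|n IH]; intros Hn HF; [simpl; lra|].
  destruct (HF n ltac:(lia)) as [HF0 HFq].
  pose proof (IH ltac:(lia) ltac:(intros; apply HF; lia)).
  pose proof (flux_nonneg F n ltac:(lia) ltac:(intros; apply HF; lia)).
  pose proof (flux_succ_le F n ltac:(lia) HF0 ltac:(assumption)).
  rewrite S_INR. lra.
Qed.

Lemma mesh_sum_mono g j n : (j <= n <= N)%nat -> (forall m, (1 <= m <= n)%nat -> 0 <= g m) ->
  mesh_sum g x j <= mesh_sum g x n.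
Proof.
  induction n as [|n IH]; intros Hjn Hg.
  - replace j with 0%nat by lia. lra.
  - destruct (Nat.eq_dec j (S n)) as [->|Hne]; [lra|].
    simpl. pose proof (IH ltac:(lia) ltac:(intros; apply Hg; lia)).
    pose proof (Hg (S n) ltac:(lia)). pose proof (Hstep (S n) ltac:(lia)). nra.
Qed.

Lemma mesh_sum_le g G n : (n <= N)%nat -> (forall m, (1 <= m <= n)%nat -> g m <= G) ->
  mesh_sum g x n <= G * (x n - x 0%nat).
Proof.
  induction n as [|n IH]; intros Hn Hg; simpl.
  - replace (G * (x 0%nat - x 0%nat)) with 0 by ring. lra.
  - pose proof (IH ltac:(lia) ltac:(intros; apply Hg; lia)).
    pose proof (Hg (S n) ltac:(lia)). pose proof (Hstep (S n) ltac:(lia)).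
    assert (hstep x (S n) = x (S n) - x n) by (unfold hstep; rewrite Nat.sub_1_r; reflexivity).
    nra.
Qed.

Lemma mesh_sum_flux_plus F1 F2 n : (n <= N)%nat ->
  mesh_sum (flux (fun m => F1 m + F2 m)) x n = mesh_sum (flux F1) x n + mesh_sum (flux F2) x n.
Proof.
  assert (Hflux : forall k, (k <= N)%nat ->
            flux (fun m => F1 m + F2 m) k = flux F1 k + flux F2 k).
  { induction k as [|k IH]; intros Hk; simpl; [ring|].
    rewrite IH by lia. pose proof (diffusion_pos k ltac:(lia)). pose proof (Hb k ltac:(lia)).
    field. lra. }
  induction n as [|n IH]; intros Hn; cbn [mesh_sum]; [ring|].
  rewrite IH, (Hflux (S n)) by lia. ring.
Qed.

(* Where F vanishes, beta g_{m+1} h_{m+1} <= kappa_m h_{m+1} (g_m - g_{m+1})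
   <= 2 eps (g_m - g_{m+1}), so the tail sum telescopes whatever the step sizes. *)
Lemma mesh_sum_flux_tail F n0 k : (n0 + k <= N)%nat ->
  (forall m, (m < n0 + k)%nat -> 0 <= F m) -> (forall m, (n0 <= m < n0 + k)%nat -> F m = 0) ->
  mesh_sum (flux F) x (n0 + k)
  <= mesh_sum (flux F) x n0 + 2 * eps / beta * (flux F n0 - flux F (n0 + k)).
Proof.
  induction k as [|k IH]; intros Hk HF HF0.
  - rewrite Nat.add_0_r. replace (flux F n0 - flux F n0) with 0 by ring. lra.
  - replace (n0 + S k)%nat with (S (n0 + k)) by lia. cbn [mesh_sum].
    pose proof (IH ltac:(lia) ltac:(intros; apply HF; lia) ltac:(intros; apply HF0; lia)).
    set (n := (n0 + k)%nat) in *.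
    pose proof (diffusion_pos n ltac:(lia)) as Hk0. pose proof (Hb n ltac:(lia)) as Hbn.
    pose proof (diffusion_mul_step_le n ltac:(lia)) as HkH.
    pose proof (Hstep (S n) ltac:(lia)) as Hh.
    pose proof (flux_nonneg F (S n) ltac:(lia) ltac:(intros; apply HF; lia)) as G1.
    assert (Hdecay : b (x n) * flux F (S n) = diffusion n * (flux F n - flux F (S n))).
    { assert (Hrec : flux F (S n) = (F n + diffusion n * flux F n) / (diffusion n + b (x n)))
        by reflexivity.
      rewrite Hrec, (HF0 n ltac:(lia)). field. lra. }
    set (g1 := flux F (S n)) in *. set (g0 := flux F n) in *.
    assert (Hdiff : 0 <= g0 - g1).
    { apply (Rmult_le_reg_l (diffusion n)); [lra|]. rewrite Rmult_0_r, <- Hdecay.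
      apply Rmult_le_pos; lra. }
    assert (Hgh : 0 <= g1 * hstep x (S n)) by (apply Rmult_le_pos; lra).
    assert (beta * (g1 * hstep x (S n)) <= 2 * eps * (g0 - g1)).
    { apply Rle_trans with (b (x n) * g1 * hstep x (S n)).
      - rewrite Rmult_assoc. apply Rmult_le_compat_r; lra.
      - rewrite Hdecay, Rmult_assoc, (Rmult_comm (g0 - g1)), <- Rmult_assoc.
        apply Rmult_le_compat_r; lra. }
    assert (g1 * hstep x (S n) <= 2 * eps / beta * (g0 - g1)).
    { replace (2 * eps / beta * (g0 - g1)) with (2 * eps * (g0 - g1) / beta) by (field; lra).
      apply (Rle_div_r (g1 * hstep x (S n))); lra. }
    lra.
Qed.

Lemma LN_minimum_principle Z : 0 <= Z 0%nat -> 0 <= Z N ->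
  (forall i, (1 <= i <= N - 1)%nat -> 0 <= LN eps b c x Z i) ->
  forall i, (i <= N)%nat -> 0 <= Z i.
Proof.
  intros H0 HN HL i Hi.
  destruct (exists_first_argmin Z N) as [k [Hk [Hmin Hfirst]]].
  destruct (Rle_lt_dec 0 (Z k)) as [Hz|Hz]; [specialize (Hmin i Hi); lra|exfalso].
  assert (Hk1 : (1 <= k <= N - 1)%nat).
  { destruct (Nat.eq_dec k 0); [subst; lra|]. destruct (Nat.eq_dec k N); [subst; lra|]. lia. }
  (* at the first minimum D^- Z < 0 <= D^+ Z, so every term of L^N Z is <= 0, one strictly *)
  specialize (HL k Hk1).
  assert (Zm : Z k < Z (k - 1)%nat) by (apply Hfirst; lia).
  assert (Zp : Z k <= Z (k + 1)%nat) by (apply Hmin; lia).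
  pose proof (Hstep k ltac:(lia)) as hm. pose proof (Hstep (k + 1)%nat ltac:(lia)) as hp.
  pose proof (Hb k ltac:(lia)). pose proof (Hc k ltac:(lia)).
  destruct (sigma_bounds _ (rho_pos k ltac:(lia))) as [Hs _].
  unfold LN, Dpp, Dp, Dm, hbar in HL.
  set (s := Defs.sigma (rho eps b x k)) in *.
  set (P := (Z (k + 1)%nat - Z k) / hstep x (k + 1)) in *.
  set (M := (Z k - Z (k - 1)%nat) / hstep x k) in *.
  assert (HP : 0 <= P) by (apply Rdiv_le_0_compat; lra).
  assert (HM : M < 0).
  { apply Rlt_div_l; lra. }
  assert (0 < eps * s * ((P - M) / ((hstep x k + hstep x (k + 1)) / 2))).
  { apply Rmult_lt_0_compat; [apply Rmult_lt_0_compat; lra|]. apply Rdiv_lt_0_compat; lra. }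
  nra.
Qed.

Lemma LN_barrier F i : (1 <= i <= N - 1)%nat ->
  LN eps b c x (barrier F) i = F i + c (x i) * barrier F i.
Proof.
  intros Hi. pose proof (Hstep i ltac:(lia)). pose proof (Hstep (S i) ltac:(lia)).
  pose proof (diffusion_pos i ltac:(lia)). pose proof (Hb i ltac:(lia)).
  pose proof (hstep_succ_le_2hbar i ltac:(lia)).
  assert (HDp : Dp x (barrier F) i = - flux F (S i)).
  { unfold Dp, barrier. rewrite Nat.add_1_r. cbn [mesh_sum]. field. lra. }
  assert (HDm : Dm x (barrier F) i = - flux F i).
  { unfold Dm, barrier. destruct i as [|m]; [lia|]. replace (S m - 1)%nat with m by lia. cbn [mesh_sum].
    field. lra. }
  assert (Hrec : flux F (S i) * (diffusion i + b (x i)) = F i + diffusion i * flux F i).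
  { change (flux F (S i)) with ((F i + diffusion i * flux F i) / (diffusion i + b (x i))).
    field. lra. }
  unfold LN, Dpp. rewrite HDp, HDm. unfold diffusion in *.
  set (s := Defs.sigma (rho eps b x i)) in *.
  replace (- eps * s * ((- flux F (S i) - - flux F i) / hbar x i) - b (x i) * - flux F (S i))
    with (flux F (S i) * (eps * s / hbar x i + b (x i)) - eps * s / hbar x i * flux F i)
    by (field; lra).
  rewrite Hrec. ring.
Qed.

Lemma barrier_comparison e F : e 0%nat = 0 -> e N = 0 ->
  (forall m, (m < N)%nat -> 0 <= F m) ->
  (forall i, (1 <= i <= N - 1)%nat -> Rabs (LN eps b c x e i) <= F i) ->
  forall i, (i <= N)%nat -> Rabs (e i) <= mesh_sum (flux F) x N.
Proof.
  intros He0 HeN HF HLe i Hi.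
  assert (Hg : forall m, (1 <= m <= N)%nat -> 0 <= flux F m)
    by (intros m Hm; apply flux_nonneg; [lia|intros; apply HF; lia]).
  assert (HV : forall j, (j <= N)%nat -> 0 <= barrier F j /\ barrier F j <= mesh_sum (flux F) x N).
  { intros j Hj. unfold barrier.
    pose proof (mesh_sum_mono (flux F) j N ltac:(lia) Hg).
    pose proof (mesh_sum_mono (flux F) 0 j ltac:(lia) ltac:(intros; apply Hg; lia)).
    simpl in *. lra. }
  assert (HLV : forall k, (1 <= k <= N - 1)%nat -> F k <= LN eps b c x (barrier F) k).
  { intros k Hk. rewrite LN_barrier by exact Hk.
    pose proof (Hc k ltac:(lia)). pose proof (proj1 (HV k ltac:(lia))). nra. }
  pose proof (HV 0%nat ltac:(lia)). pose proof (HV N ltac:(lia)).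
  assert (Hminus : 0 <= barrier F i - e i).
  { apply (LN_minimum_principle (fun j => barrier F j - e j)); [lra | lra | | exact Hi].
    intros k Hk. rewrite LN_minus. pose proof (HLV k Hk). pose proof (HLe k Hk).
    pose proof (Rle_abs (LN eps b c x e k)). lra. }
  assert (Hplus : 0 <= barrier F i + e i).
  { apply (LN_minimum_principle (fun j => barrier F j + e j)); [lra | lra | | exact Hi].
    intros k Hk. rewrite LN_plus. pose proof (HLV k Hk). pose proof (HLe k Hk).
    pose proof (Rle_abs (- LN eps b c x e k)). rewrite Rabs_Ropp in *. lra. }
  pose proof (HV i Hi). apply Rabs_le. lra.
Qed.

End DiscreteBarrier.

Section LayerAdaptedMesh.

Variables (xi : R) (N J : nat).
Hypotheses (Hxi : 0 < xi < 1) (HJ : (1 <= J < N)%nat).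

Local Notation x := (mesh xi N J).

Lemma fine_step_pos : 0 < xi / INR J <= xi.
Proof.
  assert (1 <= INR J) by (apply (le_INR 1); lia).
  split; [apply Rdiv_lt_0_compat; lra|]. apply Rle_div_l; nra.
Qed.

Lemma coarse_step_pos : 0 < (1 - xi) / INR (N - J).
Proof. apply Rdiv_lt_0_compat; [lra | apply lt_0_INR; lia]. Qed.

Lemma mesh_fine i : (i <= J)%nat -> x i = INR i * (xi / INR J).
Proof. intros Hi. unfold mesh. apply Nat.leb_le in Hi. rewrite Hi. reflexivity. Qed.

Lemma mesh_coarse i : (J <= i)%nat -> x i = xi + INR (i - J) * ((1 - xi) / INR (N - J)).
Proof.
  intros Hi. unfold mesh. destruct (Nat.eq_dec i J) as [->|Hne].
  - rewrite Nat.leb_refl, Nat.sub_diag. simpl.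
    assert (0 < INR J) by (apply lt_0_INR; lia).
    assert (0 < INR (N - J)) by (apply lt_0_INR; lia). field. lra.
  - replace (i <=? J)%nat with false by (symmetry; apply Nat.leb_gt; lia). reflexivity.
Qed.

Lemma mesh_0 : x 0%nat = 0.
Proof. rewrite mesh_fine by lia. simpl. ring. Qed.

Lemma mesh_J : x J = xi.
Proof.
  rewrite mesh_fine by lia. assert (0 < INR J) by (apply lt_0_INR; lia). field. lra.
Qed.

Lemma mesh_N : x N = 1.
Proof.
  rewrite mesh_coarse by lia. assert (0 < INR (N - J)) by (apply lt_0_INR; lia). field. lra.
Qed.

Lemma hstep_fine i : (1 <= i <= J)%nat -> hstep x i = xi / INR J.
Proof.
  intros Hi. unfold hstep. rewrite !mesh_fine by lia.
  replace i with (S (i - 1)) at 1 by lia. rewrite S_INR. ring.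
Qed.

Lemma hstep_coarse i : (J < i)%nat -> hstep x i = (1 - xi) / INR (N - J).
Proof.
  intros Hi. unfold hstep. rewrite !mesh_coarse by lia.
  replace (i - J)%nat with (S (i - 1 - J)) by lia. rewrite S_INR. ring.
Qed.

Lemma mesh_hstep_pos i : (1 <= i <= N)%nat -> 0 < hstep x i.
Proof.
  intros Hi. pose proof fine_step_pos. pose proof coarse_step_pos.
  destruct (le_lt_dec i J).
  - rewrite hstep_fine by lia. lra.
  - rewrite hstep_coarse by lia. lra.
Qed.

Lemma hbar_fine_le i : (i < J)%nat -> hbar x i <= xi / INR J.
Proof.
  intros Hi. pose proof fine_step_pos. unfold hbar. rewrite (hstep_fine (i + 1)) by lia.
  destruct i as [|i].
  - assert (hstep x 0 = 0) by (unfold hstep; simpl; ring). lra.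
  - rewrite hstep_fine by lia. lra.
Qed.

Lemma mesh_mono i j : (i <= j <= N)%nat -> x i <= x j.
Proof.
  induction j as [|j IH]; intros Hij.
  - replace i with 0%nat by lia. lra.
  - destruct (Nat.eq_dec i (S j)) as [->|Hne]; [lra|].
    pose proof (IH ltac:(lia)). pose proof (mesh_hstep_pos (S j) ltac:(lia)).
    unfold hstep in *. replace (S j - 1)%nat with j in * by lia. lra.
Qed.

Lemma mesh_interior i : (1 <= i <= N - 1)%nat -> 0 < x i < 1.
Proof.
  intros Hi. pose proof (mesh_mono 1 i ltac:(lia)). pose proof (mesh_mono i (N - 1) ltac:(lia)).
  pose proof (mesh_hstep_pos 1 ltac:(lia)) as H1. pose proof (mesh_hstep_pos N ltac:(lia)) as HN.
  unfold hstep in H1, HN. simpl in H1. rewrite mesh_0 in H1. rewrite mesh_N in HN. lra.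
Qed.

Lemma mesh_range i : (i <= N)%nat -> 0 <= x i <= 1.
Proof.
  intros Hi. pose proof (mesh_mono 0 i ltac:(lia)). pose proof (mesh_mono i N ltac:(lia)).
  rewrite mesh_0, mesh_N in *. lra.
Qed.

End LayerAdaptedMesh.

Lemma exp_le_compat p q : p <= q -> exp p <= exp q.
Proof.
  intros Hpq. destruct (Rle_lt_or_eq_dec _ _ Hpq) as [Hlt | ->]; [|lra].
  apply Rlt_le, exp_increasing, Hlt.
Qed.

Definition layer_source (J : nat) (A : R) (m : nat) : R := if (m <? J)%nat then A else 0.

Section LayerBarrier.

Variables (eps beta Bm : R) (b c : R -> R) (xi : R) (N J : nat).
Hypotheses (Heps : 0 < eps) (Hbeta : 0 < beta) (Hxi : 0 < xi < 1) (HJ : (1 <= J < N)%nat)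
  (Hb : forall t, 0 <= t <= 1 -> beta <= b t <= Bm)
  (Hc : forall t, 0 <= t <= 1 -> 0 <= c t).

Local Notation x := (mesh xi N J).

Lemma b_mesh_ge i : (i <= N)%nat -> beta <= b (x i).
Proof. intros Hi. apply Hb, mesh_range; auto. Qed.

Lemma c_mesh_nonneg i : (i <= N)%nat -> 0 <= c (x i).
Proof. intros Hi. apply Hc, mesh_range; auto. Qed.

Let Hstep := mesh_hstep_pos xi N J Hxi HJ.

Lemma sigma_layer_ge n : (n < J)%nat -> 1 <= Defs.sigma (rho eps b x n) * exp (Bm * (xi / eps)).
Proof.
  intros Hn.
  destruct (sigma_bounds _ (rho_pos eps beta b x N Heps Hbeta Hstep b_mesh_ge n ltac:(lia)))
    as [Hs [_ Hse]].
  apply Rle_trans with (1 := Hse). apply Rmult_le_compat_l; [lra|]. apply exp_le_compat.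
  destruct (fine_step_pos xi N J Hxi HJ) as [Hh0 Hh1].
  pose proof (Hb (x n) (mesh_range xi N J Hxi HJ n ltac:(lia))).
  unfold rho. rewrite (hstep_fine xi N J HJ) by lia.
  set (h := xi / INR J) in *.
  assert (b (x n) * h <= Bm * xi) by (apply Rmult_le_compat; lra).
  replace (2 * (b (x n) * h / (2 * eps))) with (b (x n) * h * / eps) by (field; lra).
  replace (Bm * (xi / eps)) with (Bm * xi * / eps) by (field; lra).
  apply Rmult_le_compat_r; [apply Rlt_le, Rinv_0_lt_compat|]; lra.
Qed.

Lemma layer_flux_le_exp A n : 0 <= A -> (n <= J)%nat ->
  flux eps b x (layer_source J A) n <= A * (xi / eps) * exp (Bm * (xi / eps)).
Proof.
  intros HA Hn. set (E := exp (Bm * (xi / eps))).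
  assert (HE : 0 < E) by apply exp_pos.
  destruct (fine_step_pos xi N J Hxi HJ) as [Hh0 _].
  set (h := xi / INR J) in *.
  assert (Hq : 0 <= A * h * E / eps) by (apply Rdiv_le_0_compat; [apply Rmult_le_pos; nra|lra]).
  apply Rle_trans with (INR n * (A * h * E / eps)).
  - apply (flux_le_linear eps beta b x N Heps Hbeta Hstep b_mesh_ge); [lia|].
    intros m Hm. unfold layer_source.
    replace (m <? J)%nat with true by (symmetry; apply Nat.ltb_lt; lia).
    split; [exact HA|].
    pose proof (sigma_layer_ge m ltac:(lia)) as Hse.
    destruct (sigma_bounds _ (rho_pos eps beta b x N Heps Hbeta Hstep b_mesh_ge m ltac:(lia)))
      as [Hs _].
    pose proof (hbar_fine_le xi N J Hxi HJ m ltac:(lia)) as Hhb.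
    pose proof (hstep_succ_le_2hbar x N Hstep m ltac:(lia)) as Hhb0.
    unfold diffusion. fold E h in Hse, Hhb.
    set (s := Defs.sigma (rho eps b x m)) in *. set (hb := hbar x m) in *.
    replace (A / (eps * s / hb)) with (A * hb / eps * / s) by (field; repeat split; lra).
    assert (Hinv : / s <= E).
    { apply (Rmult_le_reg_l s); [lra|]. rewrite Rinv_r; lra. }
    assert (A * hb / eps <= A * h / eps).
    { apply Rmult_le_compat_r; [apply Rlt_le, Rinv_0_lt_compat; lra|]. apply Rmult_le_compat_l; lra. }
    assert (0 <= A * hb / eps) by (apply Rdiv_le_0_compat; [apply Rmult_le_pos|]; lra).
    apply Rle_trans with (A * h / eps * E).
    + apply Rmult_le_compat; try lra. apply Rlt_le, Rinv_0_lt_compat; lra.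
    + right. field. lra.
  - assert (INR n <= INR J) by (apply le_INR; lia).
    apply Rle_trans with (INR J * (A * h * E / eps)); [apply Rmult_le_compat_r; lra|].
    right. unfold h. assert (0 < INR J) by (apply lt_0_INR; lia). field. lra.
Qed.

Lemma layer_flux_le A n : 0 <= A -> (n <= J)%nat ->
  flux eps b x (layer_source J A) n <= A * (xi / eps) * (exp Bm + / beta).
Proof.
  intros HA Hn.
  assert (Hy : 0 < xi / eps) by (apply Rdiv_lt_0_compat; lra).
  assert (Hib : 0 < / beta) by (apply Rinv_0_lt_compat; lra).
  pose proof (exp_pos Bm).
  assert (0 <= A * (xi / eps)) by (apply Rmult_le_pos; lra).
  (* thin layers (xi <= eps) use the growth bound, thick ones the uniform bound A / beta *)
  destruct (Rle_dec (xi / eps) 1) as [Hy1|Hy1].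
  - apply Rle_trans with (1 := layer_flux_le_exp A n HA Hn).
    assert (exp (Bm * (xi / eps)) <= exp Bm).
    { apply exp_le_compat. pose proof (Hb 0 ltac:(lra)). rewrite <- (Rmult_1_r Bm) at 2.
      apply Rmult_le_compat_l; lra. }
    apply Rmult_le_compat_l; lra.
  - apply Rle_trans with (A / beta).
    + apply (flux_le eps beta b x N Heps Hbeta Hstep b_mesh_ge); [lia|lra|].
      intros m _. unfold layer_source. destruct (m <? J)%nat; lra.
    + assert (A * / beta <= A * (xi / eps) * / beta).
      { apply Rmult_le_compat_r; [lra|]. rewrite <- (Rmult_1_r A) at 1.
        apply Rmult_le_compat_l; lra. }
      assert (0 <= A * (xi / eps) * exp Bm) by (apply Rmult_le_pos; lra).
      unfold Rdiv. lra.
Qed.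

Lemma layer_barrier_le A : 0 <= A ->
  mesh_sum (flux eps b x (layer_source J A)) x N <= (1 + 2 * (exp Bm + / beta)) * xi * A / beta.
Proof.
  intros HA. set (F := layer_source J A).
  assert (HF : forall m, 0 <= F m <= A)
    by (intros m; unfold F, layer_source; destruct (m <? J)%nat; lra).
  assert (HF0 : forall m, (J <= m < N)%nat -> F m = 0).
  { intros m Hm. unfold F, layer_source.
    replace (m <? J)%nat with false by (symmetry; apply Nat.ltb_ge; lia). reflexivity. }
  pose proof (mesh_sum_flux_tail eps beta b x N Heps Hbeta Hstep b_mesh_ge F J (N - J)
    ltac:(lia) ltac:(intros; apply HF) ltac:(intros; apply HF0; lia)) as Htail.
  replace (J + (N - J))%nat with N in Htail by lia.
  assert (Hfine : mesh_sum (flux eps b x F) x J <= A / beta * xi).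
  { assert (Hg : forall m, (1 <= m <= J)%nat -> flux eps b x F m <= A / beta).
    { intros m Hm. apply (flux_le eps beta b x N Heps Hbeta Hstep b_mesh_ge); [lia|lra|].
      intros; apply HF. }
    pose proof (mesh_sum_le x N Hstep (flux eps b x F) (A / beta) J ltac:(lia) Hg) as Hsum.
    rewrite (mesh_J xi N J HJ), (mesh_0 xi N J HJ), Rminus_0_r in Hsum. exact Hsum. }
  pose proof (layer_flux_le A J HA ltac:(lia)) as HgJ. fold F in HgJ.
  pose proof (flux_nonneg eps beta b x N Heps Hbeta Hstep b_mesh_ge F N ltac:(lia)
    ltac:(intros; apply HF)) as HgN.
  assert (2 * eps / beta * (flux eps b x F J - flux eps b x F N)
          <= 2 * eps / beta * (A * (xi / eps) * (exp Bm + / beta))).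
  { apply Rmult_le_compat_l; [apply Rdiv_le_0_compat|]; lra. }
  replace ((1 + 2 * (exp Bm + / beta)) * xi * A / beta)
    with (A / beta * xi + 2 * eps / beta * (A * (xi / eps) * (exp Bm + / beta))) by (field; lra).
  lra.
Qed.

Lemma const_barrier_le D : 0 <= D -> mesh_sum (flux eps b x (fun _ => D)) x N <= D / beta.
Proof.
  intros HD.
  assert (Hg : forall m, (1 <= m <= N)%nat -> flux eps b x (fun _ => D) m <= D / beta).
  { intros m Hm. apply (flux_le eps beta b x N Heps Hbeta Hstep b_mesh_ge); [lia|lra|].
    intros; lra. }
  pose proof (mesh_sum_le x N Hstep _ (D / beta) N ltac:(lia) Hg) as Hsum.
  rewrite (mesh_N xi N J HJ), (mesh_0 xi N J HJ) in Hsum. lra.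
Qed.

Theorem mesh_error_le e A D : 0 <= A -> 0 <= D -> e 0%nat = 0 -> e N = 0 ->
  (forall i, (1 <= i <= J - 1)%nat -> Rabs (LN eps b c x e i) <= A) ->
  (forall i, (J <= i <= N - 1)%nat -> Rabs (LN eps b c x e i) <= D) ->
  forall i, (i <= N)%nat -> Rabs (e i) <= (1 + 2 * (exp Bm + / beta)) * xi * A / beta + D / beta.
Proof.
  intros HA HD He0 HeN HeA HeD i Hi.
  set (F := fun m => layer_source J A m + D).
  assert (HF : forall m, (m < N)%nat -> 0 <= F m)
    by (intros m _; unfold F, layer_source; destruct (m <? J)%nat; lra).
  apply Rle_trans with (mesh_sum (flux eps b x F) x N).
  - apply (barrier_comparison eps beta b c x N Heps Hbeta Hstep b_mesh_ge c_mesh_nonneg);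
      auto.
    intros k Hk. unfold F, layer_source. destruct (Nat.ltb_spec k J).
    + pose proof (HeA k ltac:(lia)). lra.
    + pose proof (HeD k ltac:(lia)). lra.
  - unfold F. rewrite (mesh_sum_flux_plus eps beta b x N Heps Hbeta Hstep b_mesh_ge) by lia.
    pose proof (layer_barrier_le A HA). pose proof (const_barrier_le D HD). lra.
Qed.

End LayerBarrier.

Lemma mesh_index_bounds Q N J : 0 < Q < 1 -> (0 < N)%nat -> INR J = Q * INR N -> (1 <= J < N)%nat.
Proof.
  intros HQ HN HJ. assert (0 < INR N) by (apply lt_0_INR; lia). split.
  - destruct J; [simpl in HJ; nra | lia].
  - apply INR_lt. rewrite HJ. nra.
Qed.

Lemma ln_lambda_pos (lamN : bool) eps N : 0 < eps < 1 -> (1 < N)%nat ->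
  0 < ln (if lamN then INR N else / eps).
Proof.
  intros Heps HN. rewrite <- ln_1. apply ln_increasing; [lra|]. destruct lamN.
  - apply (lt_INR 1) in HN. simpl in HN. lra.
  - replace 1 with (/ 1) at 1 by apply Rinv_1. apply Rinv_lt_contravar; lra.
Qed.

Theorem theorem3 (b c f : R -> R) (beta a Q C' : R) (lamN : bool) :
  Ck01 4 b -> Ck01 4 c -> Ck01 4 f ->
  0 < beta -> (forall t, 0 <= t <= 1 -> beta < b t) ->
  (forall t, 0 <= t <= 1 -> 0 <= c t) ->
  0 < a -> 0 < Q < 1 -> (exists p q : Z, q <> 0%Z /\ Q = IZR p / IZR q) ->
  0 < C' ->
  exists C : R, 0 < C /\
  forall (eps : R) (N J : nat) (u u0 : R -> R) (W : nat -> R) (eta1 eta2 : R),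
    0 < eps < 1 -> (0 < N)%nat -> INR J = Q * INR N ->
    let lam := if lamN then INR N else / eps in
    let xi := a * eps / beta * ln lam in
    xi <= Q ->
    let x := mesh xi N J in
    Ck01 2 u ->
    (forall t, 0 < t < 1 -> - eps * Derive_n u 2 t - b t * Derive u t + c t * u t = f t) ->
    u 0 = 0 -> u 1 = 0 ->
    Ck01 2 u0 ->
    (forall t, 0 < t < 1 -> - b t * Derive u0 t + c t * u0 t = f t) ->
    u0 1 = 0 ->
    let w := fun t => u t - u0 t in
    W 0%nat = - u0 0 ->
    (forall i, (1 <= i <= N - 1)%nat -> LN eps b c x W i = eps * Derive_n u0 2 (x i)) ->
    W N = 0 ->
    0 <= eta1 -> 0 <= eta2 ->
    (forall i, (1 <= i <= J - 1)%nat -> Rabs (tau eps b x w i) <= C' * eta1 / eps) ->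
    (forall i, (J <= i <= N - 1)%nat -> Rabs (tau eps b x w i) <= C' * eta2) ->
    forall i, (i <= N)%nat ->
      Rabs (w (x i) - W i) <= C * Rmax (eta1 * ln lam) eta2.
Proof.
  intros Hb _ _ Hbeta Hbb Hcc Ha HQ _ HC'.
  destruct (Ck01_bounded_above 4 b Hb) as [Bm HBm].
  set (K := exp Bm + / beta).
  set (C1 := C' * a * (1 + 2 * K) / (beta * beta)).
  assert (HK : 0 < K) by (pose proof (exp_pos Bm); pose proof (Rinv_0_lt_compat beta Hbeta); unfold K; lra).
  assert (HC1 : 0 < C1) by (apply Rdiv_lt_0_compat; [apply Rmult_lt_0_compat|]; nra).
  assert (HCb : 0 < C' / beta) by (apply Rdiv_lt_0_compat; lra).
  exists (C1 + C' / beta). split; [lra|].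
  intros eps N J u u0 W eta1 eta2 Heps HN HJ lam xi Hxi x Hu Hode Hu0z Hu1 Hu0 Hode0 Hu01 w
    HW0 HWeq HWN He1 He2 Ht1 Ht2 i Hi.
  pose proof (mesh_index_bounds Q N J HQ HN HJ) as HJN.
  assert (Hln : 0 < ln lam) by (apply ln_lambda_pos; [lra | lia]).
  assert (Hxi01 : 0 < xi < 1).
  { split; [|lra]. apply Rmult_lt_0_compat; [apply Rdiv_lt_0_compat; nra | lra]. }
  assert (Hb' : forall t, 0 <= t <= 1 -> beta <= b t <= Bm).
  { intros t Ht. split; [apply Rlt_le, Hbb | apply HBm]; exact Ht. }
  assert (HLe : forall k, (1 <= k <= N - 1)%nat ->
                  LN eps b c x (fun j => w (x j) - W j) k = tau eps b x w k).
  { intros k Hk. pose proof (mesh_interior xi N J Hxi01 HJN k Hk).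
    apply (LN_error_eq_tau eps b c f x u u0 W k Hu Hu0); auto. }
  eapply Rle_trans.
  { apply (mesh_error_le eps beta Bm b c xi N J (proj1 Heps) Hbeta Hxi01 HJN Hb' Hcc
             (fun j => w (x j) - W j) (C' * eta1 / eps) (C' * eta2)); try exact Hi.
    - apply Rdiv_le_0_compat; nra.
    - nra.
    - assert (Hx0 : x 0%nat = 0) by exact (mesh_0 xi N J HJN).
      unfold w. rewrite Hx0, HW0, Hu0z. ring.
    - assert (HxN : x N = 1) by exact (mesh_N xi N J HJN).
      unfold w. rewrite HxN, HWN, Hu1, Hu01. ring.
    - intros k Hk. rewrite HLe by lia. apply Ht1; exact Hk.
    - intros k Hk. rewrite HLe by lia. apply Ht2; exact Hk. }
  fold K. replace ((1 + 2 * K) * xi * (C' * eta1 / eps) / beta + C' * eta2 / beta)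
    with (C1 * (eta1 * ln lam) + C' / beta * eta2) by (unfold C1, xi; field; lra).
  pose proof (Rmax_l (eta1 * ln lam) eta2). pose proof (Rmax_r (eta1 * ln lam) eta2).
  assert (C1 * (eta1 * ln lam) <= C1 * Rmax (eta1 * ln lam) eta2) by (apply Rmult_le_compat_l; lra).
  assert (C' / beta * eta2 <= C' / beta * Rmax (eta1 * ln lam) eta2) by (apply Rmult_le_compat_l; lra).
  lra.
Qed.
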